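(* For every $c>0$ there is $C>0$ such that the following holds. Let $h\ge1$, $P\in\mathcal C(h)$, and suppose ${\rm diam}_2(P_i)\le\Delta\cdot{\rm diam}_2(P)$ for every hole $P_i$, where $\Delta\le c/h$. Then for every $s\in P$ there is a path in $P$ from $s$ to a point of $\partial P_0$ of length at most $C\,{\rm diam}_2(P)$.
   Context: $\mathcal C(h)$ is the family of polygonal domains $P=P_0\setminus\bigcup_{i=1}^h\operatorname{int}(P_i)$ with $P_0$ a convex polygon and $P_1,\dots,P_h$ pairwise disjoint convex polygons (holes) in the interior of $P_0$; ${\rm diam}_2(\cdot)$ denotes Euclidean diameter. *)

From Stdlib Require Import Reals Lra List Sorting.Sorted.
Import ListNotations.
Open Scope R_scope.

Definition pt := (R * R)%type.

Definition dist2 (p q : pt) : R :=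
  sqrt ((fst p - fst q) ^ 2 + (snd p - snd q) ^ 2).

Definition pset := pt -> Prop.

Fixpoint wsum (w : list R) (V : list pt) : pt :=
  match w, V with
  | a :: w', v :: V' =>
      let r := wsum w' V' in (a * fst v + fst r, a * snd v + snd r)
  | _, _ => (0, 0)
  end.

Definition conv_hull (V : list pt) : pset := fun p =>
  exists w : list R, length w = length V /\ Forall (fun a => 0 <= a) w /\
    fold_right Rplus 0 w = 1 /\ p = wsum w V.

Definition interior (S : pset) : pset := fun p =>
  exists e, 0 < e /\ forall q, dist2 p q < e -> S q.

Definition closure (S : pset) : pset := fun p =>
  forall e, 0 < e -> exists q, S q /\ dist2 p q < e.

Definition boundary (S : pset) : pset := fun p =>
  closure S p /\ ~ interior S p.

Definition convex_polygon (S : pset) : Prop :=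
  exists V : list pt, (forall p, S p <-> conv_hull V p) /\
    exists p, interior S p.

(* P = P0 \ U_{i<h} int(P_i), with P0, P_i convex polygons, the P_i pairwise
   disjoint and contained in the interior of P0. Holes indexed by i < h. *)
Definition in_class_C (h : nat) (P0 : pset) (Ph : nat -> pset) : Prop :=
  convex_polygon P0 /\
  (forall i, (i < h)%nat -> convex_polygon (Ph i)) /\
  (forall i j, (i < h)%nat -> (j < h)%nat -> i <> j ->
      forall p, Ph i p -> Ph j p -> False) /\
  (forall i, (i < h)%nat -> forall p, Ph i p -> interior P0 p).

Definition domain (h : nat) (P0 : pset) (Ph : nat -> pset) : pset := fun p =>
  P0 p /\ forall i, (i < h)%nat -> ~ interior (Ph i) p.

Definition is_diam (S : pset) (d : R) : Prop :=
  is_lub (fun r => exists p q, S p /\ S q /\ r = dist2 p q) d.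

Definition path_in (S : pset) (gamma : R -> pt) : Prop :=
  (forall t, 0 <= t <= 1 -> S (gamma t)) /\
  (forall t, 0 <= t <= 1 -> forall e, 0 < e -> exists d, 0 < d /\
     forall u, 0 <= u <= 1 -> Rabs (u - t) < d -> dist2 (gamma u) (gamma t) < e).

Fixpoint poly_len (l : list pt) : R :=
  match l with
  | p :: ((q :: _) as l') => dist2 p q + poly_len l'
  | _ => 0
  end.

Definition length_le (gamma : R -> pt) (L : R) : Prop :=
  forall ts : list R, Sorted Rle ts -> Forall (fun t => 0 <= t <= 1) ts ->
    poly_len (map gamma ts) <= L.

(* Let P = P0 \ (int P1 u ... u int Ph), where P0 and the holes Pi are
   convex polygons, and let D = diam P.  Fix a point v of P0 with minimal
   x-coordinate; it lies on the boundary of P0 and in P.  We walk from s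
   towards v along the segment [s, v].  Whenever the segment enters a hole
   Pi, we go straight to its first contact point a with Pi, jump to its last
   contact point b along the boundary of Pi, and resume from b.  The jump
   is built by pushing a radially away from an interior point of Pi to a
   square of half-width 2 diam(Pi), running along that square, and finally
   projecting the whole curve back onto Pi with the (1-Lipschitz) nearest
   point projection; the image stays on the boundary of Pi and has length
   at most 192 diam(Pi).  Each hole is visited at most once, so the path has
   length at most D + 193 (h + 1) Delta D <= (1 + 400 c) D. *)

From Stdlib Require Import Reals Lra Psatz List Sorting.Sorted.
From Stdlib Require Import ClassicalEpsilon Classical.
(* Imported last so that its interior and closure take precedence over Stdlib's. *)
Import ListNotations.
Open Scope R_scope.

Definition sqdist (p q : pt) : R := (fst p - fst q) ^ 2 + (snd p - snd q) ^ 2.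
Definition comb (l : R) (p q : pt) : pt :=
  ((1 - l) * fst p + l * fst q, (1 - l) * snd p + l * snd q).

Lemma pow2_sq x : x ^ 2 = x * x.
Proof. ring. Qed.

Lemma Rabs_sq x : Rabs x * Rabs x = x * x.
Proof. unfold Rabs; destruct Rcase_abs; ring. Qed.

Lemma Rabs_le_inv x y : Rabs x <= y -> - y <= x <= y.
Proof. unfold Rabs. destruct Rcase_abs; lra. Qed.

Lemma Rabs_div_pos x k : 0 < k -> Rabs (x / k) = Rabs x / k.
Proof. intro Hk. unfold Rdiv. rewrite Rabs_mult, Rabs_inv, (Rabs_right k) by lra. reflexivity. Qed.

Lemma Rdiv_nonneg a b : 0 <= a -> 0 < b -> 0 <= a / b.
Proof. intros. unfold Rdiv. apply Rmult_le_pos; auto. left; apply Rinv_0_lt_compat; auto. Qed.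

Lemma Rdiv_unit u k : 0 < k -> 0 <= u <= k -> 0 <= u / k <= 1.
Proof.
  intros Hk Hu. split. apply Rdiv_nonneg; lra.
  apply Rmult_le_reg_r with k; auto. unfold Rdiv; rewrite Rmult_assoc, Rinv_l by lra; lra.
Qed.

Lemma sqdist_nonneg p q : 0 <= sqdist p q.
Proof.
  unfold sqdist. pose proof (pow2_ge_0 (fst p - fst q)).
  pose proof (pow2_ge_0 (snd p - snd q)). lra.
Qed.

Lemma dist2_nonneg p q : 0 <= dist2 p q.
Proof. apply sqrt_pos. Qed.

Lemma dist2_sq p q : dist2 p q * dist2 p q = sqdist p q.
Proof. apply sqrt_sqrt, sqdist_nonneg. Qed.

Lemma dist2_le_sq p q k : 0 <= k -> sqdist p q <= k * k -> dist2 p q <= k.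
Proof.
  intros Hk H. unfold dist2. rewrite <- (sqrt_lem_1 (k*k) k); try nra.
  apply sqrt_le_1_alt. exact H.
Qed.

Lemma sq_le_dist2 p q k : 0 <= k -> k * k <= sqdist p q -> k <= dist2 p q.
Proof.
  intros Hk H. unfold dist2. rewrite <- (sqrt_lem_1 (k*k) k); try nra.
  apply sqrt_le_1_alt. exact H.
Qed.

Lemma sqdist_mono a b c d : dist2 a b <= dist2 c d -> sqdist a b <= sqdist c d.
Proof.
  intro H. rewrite <- (dist2_sq a b), <- (dist2_sq c d).
  pose proof (dist2_nonneg a b). nra.
Qed.

Lemma dist2_sym p q : dist2 p q = dist2 q p.
Proof. unfold dist2. f_equal. ring. Qed.

Lemma dist2_refl p : dist2 p p = 0.
Proof.
  unfold dist2. replace ((fst p - fst p) ^ 2 + (snd p - snd p) ^ 2) with 0 by ring.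
  apply sqrt_0.
Qed.

Lemma dist2_eq0 p q : dist2 p q = 0 -> p = q.
Proof.
  intro H. apply sqrt_eq_0 in H; [|apply sqdist_nonneg].
  destruct p as [a b], q as [c d]; simpl in *.
  pose proof (pow2_ge_0 (a - c)). pose proof (pow2_ge_0 (b - d)).
  assert (E1 : (a - c) * (a - c) = 0) by (rewrite <- pow2_sq; lra).
  assert (E2 : (b - d) * (b - d) = 0) by (rewrite <- pow2_sq; lra).
  apply Rmult_integral in E1. apply Rmult_integral in E2.
  f_equal; destruct E1, E2; lra.
Qed.

Lemma dist2_le_abs p q : dist2 p q <= Rabs (fst p - fst q) + Rabs (snd p - snd q).
Proof.
  apply dist2_le_sq. apply Rplus_le_le_0_compat; apply Rabs_pos.
  unfold sqdist. pose proof (Rabs_pos (fst p - fst q)). pose proof (Rabs_pos (snd p - snd q)).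
  rewrite !pow2_sq, <- (Rabs_sq (fst p - fst q)), <- (Rabs_sq (snd p - snd q)). nra.
Qed.

Lemma abs_le_dist2_x p q : Rabs (fst p - fst q) <= dist2 p q.
Proof.
  apply sq_le_dist2. apply Rabs_pos. unfold sqdist.
  rewrite !pow2_sq, Rabs_sq. pose proof (pow2_ge_0 (snd p - snd q)). rewrite pow2_sq in H. lra.
Qed.

Lemma abs_le_dist2_y p q : Rabs (snd p - snd q) <= dist2 p q.
Proof.
  apply sq_le_dist2. apply Rabs_pos. unfold sqdist.
  rewrite !pow2_sq, Rabs_sq. pose proof (pow2_ge_0 (fst p - fst q)). rewrite pow2_sq in H. lra.
Qed.

Lemma dist2_triangle p q r : dist2 p r <= dist2 p q + dist2 q r.
Proof.
  pose proof (dist2_sq p q) as A. pose proof (dist2_sq q r) as B.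
  pose proof (dist2_nonneg p q). pose proof (dist2_nonneg q r).
  apply dist2_le_sq. lra.
  unfold sqdist in *.
  set (u1 := fst p - fst q) in *. set (u2 := snd p - snd q) in *.
  set (w1 := fst q - fst r) in *. set (w2 := snd q - snd r) in *.
  replace (fst p - fst r) with (u1 + w1) by (unfold u1, w1; ring).
  replace (snd p - snd r) with (u2 + w2) by (unfold u2, w2; ring).
  set (A' := dist2 p q) in *. set (B' := dist2 q r) in *.
  rewrite !pow2_sq in *.
  (* Cauchy-Schwarz for the inner product of the two displacements *)
  assert (CS : (u1*w1+u2*w2)*(u1*w1+u2*w2) <= (A'*B')*(A'*B')).
  { replace ((A'*B')*(A'*B')) with ((A'*A')*(B'*B')) by ring. rewrite A, B.
    pose proof (pow2_ge_0 (u1*w2-u2*w1)) as HH. rewrite pow2_sq in HH. nra. }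
  assert (u1*w1+u2*w2 <= A'*B') by (assert (0 <= A'*B') by nra; nra).
  nra.
Qed.

Lemma dist2_scale p q k a b : fst p - fst q = k * a -> snd p - snd q = k * b ->
  dist2 p q = Rabs k * sqrt (a ^ 2 + b ^ 2).
Proof.
  intros H1 H2. unfold dist2. rewrite H1, H2. apply sqrt_lem_1.
  nra. apply Rmult_le_pos. apply Rabs_pos. apply sqrt_pos.
  transitivity ((Rabs k * Rabs k) * (sqrt (a ^ 2 + b ^ 2) * sqrt (a ^ 2 + b ^ 2))). ring.
  rewrite Rabs_sq, sqrt_sqrt by nra. ring.
Qed.

Lemma dist2_shift_x p a : dist2 p (fst p + a, snd p) = Rabs a.
Proof.
  rewrite (dist2_scale _ _ a (-1) 0) by (simpl; ring).
  replace ((-1) ^ 2 + 0 ^ 2) with 1 by ring. rewrite sqrt_1. ring.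
Qed.

Lemma comb_0 p q : comb 0 p q = p.
Proof. destruct p; unfold comb; simpl; f_equal; ring. Qed.

Lemma comb_1 p q : comb 1 p q = q.
Proof. destruct q; unfold comb; simpl; f_equal; ring. Qed.

Lemma comb_swap th p x : comb th p x = comb (1 - th) x p.
Proof. unfold comb. f_equal; ring. Qed.

Lemma comb_comb t w th s v : comb th (comb t s v) (comb w s v) = comb (t + th * (w - t)) s v.
Proof. unfold comb. simpl. f_equal; ring. Qed.

Lemma dist2_comb_same l m p q : dist2 (comb l p q) (comb m p q) = Rabs (l - m) * dist2 p q.
Proof.
  rewrite (dist2_scale _ _ (l - m) (fst q - fst p) (snd q - snd p)) by (unfold comb; simpl; ring).
  rewrite (dist2_sym p q). reflexivity.
Qed.

Lemma dist2_comb_r l v q q' : dist2 (comb l v q) (comb l v q') = Rabs l * dist2 q q'.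
Proof.
  rewrite (dist2_scale _ _ l (fst q - fst q') (snd q - snd q')) by (unfold comb; simpl; ring).
  reflexivity.
Qed.

Lemma dist2_comb_end l p q : dist2 p (comb l p q) = Rabs l * dist2 p q.
Proof.
  rewrite (dist2_scale _ _ l (fst p - fst q) (snd p - snd q)) by (unfold comb; simpl; ring).
  reflexivity.
Qed.

Lemma comb_near s v m e : 0 < e -> exists r, 0 < r /\
  forall u, Rabs (u - m) < r -> dist2 (comb m s v) (comb u s v) < e.
Proof.
  intro He. pose proof (dist2_nonneg s v).
  exists (e / (dist2 s v + 1)). split. apply Rdiv_lt_0_compat; lra.
  intros u Hu. rewrite dist2_comb_same, Rabs_minus_sym.
  apply Rle_lt_trans with (Rabs (u - m) * (dist2 s v + 1)). pose proof (Rabs_pos (u - m)). nra.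
  apply Rmult_lt_reg_r with (/ (dist2 s v + 1)). apply Rinv_0_lt_compat; lra.
  rewrite Rmult_assoc, Rinv_r by lra. unfold Rdiv in Hu. lra.
Qed.
Definition lipschitz01 (g : R -> pt) (L : R) := forall u t, 0 <= u <= 1 -> 0 <= t <= 1 ->
  dist2 (g u) (g t) <= L * Rabs (u - t).

(* g : [0, 1] -> S is an L-Lipschitz path from a to b; its length is at most L. *)
Definition lip_path (S : pset) (g : R -> pt) (L : R) (a b : pt) :=
  lipschitz01 g L /\ (forall t, 0 <= t <= 1 -> S (g t)) /\ g 0 = a /\ g 1 = b.

Lemma lip_path_weaken S g L L' a b : L <= L' -> lip_path S g L a b -> lip_path S g L' a b.
Proof.
  intros HL [H1 H2]. split; auto. intros u t Hu Ht.
  pose proof (Rabs_pos (u - t)). specialize (H1 u t Hu Ht). nra.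
Qed.

Lemma lip_path_mono S S' g L a b : (forall p, S p -> S' p) -> lip_path S g L a b -> lip_path S' g L a b.
Proof. intros HS [H1 [H2 H3]]. repeat split; auto; apply H3. Qed.

Lemma segment_path (S : pset) p q : (forall th, 0 <= th <= 1 -> S (comb th p q)) ->
  lip_path S (fun t => comb t p q) (dist2 p q) p q.
Proof.
  intros HS. repeat split; auto.
  - intros u t _ _. rewrite dist2_comb_same. lra.
  - apply comb_0.
  - apply comb_1.
Qed.

Lemma reverse_path S g L a b : lip_path S g L a b -> lip_path S (fun t => g (1 - t)) L b a.
Proof.
  intros [H1 [H2 [H3 H4]]]. repeat split.
  - intros u t Hu Ht. replace (u - t) with (-((1-u) - (1-t))) by ring.
    rewrite Rabs_Ropp. apply H1; lra.
  - intros t Ht. apply H2; lra.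
  - replace (1 - 0) with 1 by ring. exact H4.
  - replace (1 - 1) with 0 by ring. exact H3.
Qed.

Definition path_concat (g1 g2 : R -> pt) (al : R) (t : R) : pt :=
  if Rle_dec t al then g1 (t / al) else g2 ((t - al) / (1 - al)).

(* The Lipschitz estimate across the junction al of a concatenation: going
   through the common endpoint b costs L1 (al - u) / al + L2 (t - al) / (1 - al). *)
Lemma concat_junction g1 g2 L1 L2 L b al u t : 0 < al < 1 ->
  L1 / al = L -> L2 / (1 - al) = L -> lipschitz01 g1 L1 -> lipschitz01 g2 L2 ->
  g1 1 = b -> g2 0 = b -> 0 <= u <= al -> al < t <= 1 ->
  dist2 (g1 (u / al)) (g2 ((t - al) / (1 - al))) <= L * Rabs (u - t).
Proof.
  intros Hal E1 E2 A1 B1 A4 B3 Hu Ht.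
  eapply Rle_trans. apply (dist2_triangle _ b).
  rewrite <- A4 at 1. rewrite <- B3 at 1.
  pose proof (A1 (u / al) 1 ltac:(apply Rdiv_unit; lra) ltac:(lra)) as X1.
  pose proof (B1 0 ((t - al) / (1 - al)) ltac:(lra) ltac:(apply Rdiv_unit; lra)) as X2.
  replace (u / al - 1) with ((u - al) / al) in X1 by (field; lra).
  replace (0 - (t - al) / (1 - al)) with ((al - t) / (1 - al)) in X2 by (field; lra).
  rewrite Rabs_div_pos in X1, X2 by lra.
  rewrite (Rabs_left1 (u - al)) in X1 by lra.
  rewrite (Rabs_left1 (al - t)) in X2 by lra.
  rewrite (Rabs_left1 (u - t)) by lra.
  replace (L1 * (- (u - al) / al)) with ((L1 / al) * (al - u)) in X1 by (field; lra).
  replace (L2 * (- (al - t) / (1 - al))) with ((L2 / (1 - al)) * (t - al)) in X2 by (field; lra).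
  rewrite E1 in X1. rewrite E2 in X2. lra.
Qed.

(* Splitting [0, 1] in the ratio L1 : L2 makes both halves (L1 + L2)-Lipschitz. *)
Lemma concat_path S g1 g2 L1 L2 a b c : 0 < L1 -> 0 < L2 ->
  lip_path S g1 L1 a b -> lip_path S g2 L2 b c ->
  lip_path S (path_concat g1 g2 (L1 / (L1 + L2))) (L1 + L2) a c.
Proof.
  intros P1 P2 [A1 [A2 [A3 A4]]] [B1 [B2 [B3 B4]]].
  set (al := L1 / (L1 + L2)).
  assert (Hal : 0 < al < 1).
  { unfold al. split. apply Rdiv_lt_0_compat; lra. apply Rmult_lt_reg_r with (L1 + L2); [lra|].
    unfold Rdiv; rewrite Rmult_assoc, Rinv_l by lra; lra. }
  assert (E1 : L1 / al = L1 + L2) by (unfold al; field; lra).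
  assert (E2 : L2 / (1 - al) = L1 + L2) by (unfold al; field; split; lra).
  assert (In1 : forall u, 0 <= u <= al -> 0 <= u / al <= 1) by (intros; apply Rdiv_unit; lra).
  assert (In2 : forall u, al < u <= 1 -> 0 <= (u - al) / (1 - al) <= 1)
    by (intros; apply Rdiv_unit; lra).
  repeat split.
  - intros u t Hu Ht. unfold path_concat.
    destruct (Rle_dec u al) as [Hua|Hua]; destruct (Rle_dec t al) as [Hta|Hta].
    + eapply Rle_trans. apply A1; apply In1; lra.
      replace (u / al - t / al) with ((u - t) / al) by (field; lra).
      rewrite Rabs_div_pos by lra. rewrite <- E1. right; field; lra.
    + apply (concat_junction _ _ L1 L2 _ b); auto; lra.
    + rewrite dist2_sym, Rabs_minus_sym. apply (concat_junction _ _ L1 L2 _ b); auto; lra.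
    + eapply Rle_trans. apply B1; apply In2; lra.
      replace ((u - al) / (1 - al) - (t - al) / (1 - al)) with ((u - t) / (1 - al)) by (field; lra).
      rewrite Rabs_div_pos by lra. rewrite <- E2. right; field; lra.
  - intros t Ht. unfold path_concat. destruct (Rle_dec t al).
    + apply A2, In1; lra.
    + apply B2, In2; lra.
  - unfold path_concat. destruct (Rle_dec 0 al); [|lra]. unfold Rdiv; rewrite Rmult_0_l. exact A3.
  - unfold path_concat. destruct (Rle_dec 1 al); [lra|].
    replace ((1 - al) / (1 - al)) with 1 by (field; lra). exact B4.
Qed.

Lemma concat3_path S g1 g2 g3 L1 L2 L3 a b c d : 0 < L1 -> 0 < L2 -> 0 < L3 ->
  lip_path S g1 L1 a b -> lip_path S g2 L2 b c -> lip_path S g3 L3 c d ->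
  exists g, lip_path S g (L1 + (L2 + L3)) a d.
Proof.
  intros H1 H2 H3 G1 G2 G3. eexists.
  eapply concat_path; [exact H1|lra|exact G1|eapply concat_path; [exact H2|exact H3|exact G2|exact G3]].
Qed.

Lemma poly_len_lipschitz g L : 0 <= L -> lipschitz01 g L -> forall ts t0,
  Sorted Rle (t0 :: ts) -> Forall (fun t => 0 <= t <= 1) (t0 :: ts) ->
  poly_len (map g (t0 :: ts)) <= L * (1 - t0).
Proof.
  intros HL HG. induction ts as [|t1 ts IH]; intros t0 HS HF.
  - simpl. inversion HF; subst. nra.
  - change (poly_len (map g (t0 :: t1 :: ts))) with
      (dist2 (g t0) (g t1) + poly_len (map g (t1 :: ts))).
    inversion HS; subst. inversion H2; subst.
    inversion HF; subst. inversion H5; subst.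
    specialize (IH t1 H1 H5).
    pose proof (HG t0 t1 H4 H6). rewrite Rabs_left1 in H by lra. nra.
Qed.

Lemma lip_path_in S g L : 0 <= L -> lipschitz01 g L -> (forall t, 0 <= t <= 1 -> S (g t)) ->
  path_in S g /\ length_le g L.
Proof.
  intros HL HG HS. split. split. exact HS.
  - intros t Ht e He. exists (e / (L + 1)). split. apply Rdiv_lt_0_compat; lra.
    intros u Hu Hd. eapply Rle_lt_trans. apply HG; auto.
    apply Rle_lt_trans with ((L + 1) * Rabs (u - t)). pose proof (Rabs_pos (u - t)); nra.
    apply Rmult_lt_reg_l with (/ (L + 1)). apply Rinv_0_lt_compat; lra.
    rewrite <- Rmult_assoc, Rinv_l by lra. rewrite Rmult_1_l. unfold Rdiv in Hd. lra.
  - intros ts HS' HF. destruct ts as [|t0 ts]. simpl. lra.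
    eapply Rle_trans. apply poly_len_lipschitz; eauto.
    inversion HF; subst. nra.
Qed.
Definition lipschitz_fun (F : pt -> R) (L : R) := forall p q, Rabs (F p - F q) <= L * dist2 p q.

Definition convex (S : pset) := forall p q th, 0 <= th <= 1 -> S p -> S q -> S (comb th p q).

(* Every Lipschitz function attains its minimum on S (S is compact). *)
Definition attains_min (S : pset) := forall F L, 0 <= L -> lipschitz_fun F L ->
  exists p, S p /\ forall q, S q -> F p <= F q.

Lemma lip_continuity (f : R -> R) K : 0 <= K -> (forall x y, Rabs (f x - f y) <= K * Rabs (x - y)) ->
  forall c, continuity_pt f c.
Proof.
  intros HK Hf c. unfold continuity_pt, continue_in, limit1_in, limit_in.
  intros eps Heps. exists (eps / (K + 1)). split. apply Rdiv_lt_0_compat; lra.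
  intros x [_ Hx]. simpl in *. unfold R_dist in *.
  eapply Rle_lt_trans. apply Hf.
  apply Rle_lt_trans with ((K + 1) * Rabs (x - c)). pose proof (Rabs_pos (x - c)); nra.
  apply Rmult_lt_reg_l with (/ (K + 1)). apply Rinv_0_lt_compat; lra.
  rewrite <- Rmult_assoc, Rinv_l by lra. rewrite Rmult_1_l. unfold Rdiv in Hx. lra.
Qed.

Fixpoint wcomb (th : R) (w1 w2 : list R) : list R :=
  match w1, w2 with
  | a :: w1', b :: w2' => ((1 - th) * a + th * b) :: wcomb th w1' w2'
  | _, _ => []
  end.

Lemma wsum_wcomb th V : forall w1 w2, length w1 = length V -> length w2 = length V ->
  wsum (wcomb th w1 w2) V = comb th (wsum w1 V) (wsum w2 V) /\
  length (wcomb th w1 w2) = length V /\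
  fold_right Rplus 0 (wcomb th w1 w2) =
    (1 - th) * fold_right Rplus 0 w1 + th * fold_right Rplus 0 w2.
Proof.
  induction V as [|v V IH]; intros w1 w2 H1 H2.
  - destruct w1, w2; simpl in *; try discriminate. unfold comb; simpl.
    split. f_equal; ring. split; auto. ring.
  - destruct w1 as [|a w1], w2 as [|b w2]; simpl in *; try discriminate.
    injection H1; injection H2; intros. destruct (IH w1 w2) as [E1 [E2 E3]]; auto.
    rewrite E1. split. unfold comb; simpl. f_equal; ring. split. rewrite E2; auto. rewrite E3; ring.
Qed.

Lemma wcomb_nonneg th w1 w2 : 0 <= th <= 1 ->
  Forall (fun a => 0 <= a) w1 -> Forall (fun a => 0 <= a) w2 ->
  Forall (fun a => 0 <= a) (wcomb th w1 w2).
Proof.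
  intros Hth. revert w2.
  induction w1 as [|a w1 IH]; intros w2 H1 H2; destruct w2 as [|b w2]; simpl; auto.
  inversion H1; inversion H2; subst. constructor. nra. auto.
Qed.

Lemma conv_hull_convex V : convex (conv_hull V).
Proof.
  intros p q th Hth [w1 [L1 [N1 [S1 E1]]]] [w2 [L2 [N2 [S2 E2]]]].
  destruct (wsum_wcomb th V w1 w2 L1 L2) as [A [B C]].
  exists (wcomb th w1 w2). split; auto. split. apply wcomb_nonneg; auto.
  split. rewrite C, S1, S2. ring. rewrite A, E1, E2. reflexivity.
Qed.

Lemma sum_nonneg w : Forall (fun a => 0 <= a) w -> 0 <= fold_right Rplus 0 w.
Proof. induction 1; simpl; lra. Qed.

Lemma wsum_zero w V : Forall (fun a => 0 <= a) w -> fold_right Rplus 0 w = 0 -> wsum w V = (0, 0).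
Proof.
  revert V. induction w as [|a w IH]; intros V HN HS; destruct V as [|v V]; simpl; auto.
  inversion HN; subst. simpl in HS. pose proof (sum_nonneg _ H2).
  assert (a = 0) by lra. rewrite (IH V); auto; [|lra]. subst. simpl. f_equal; ring.
Qed.

Lemma wsum_scale k w V : wsum (map (fun a => k * a) w) V = (k * fst (wsum w V), k * snd (wsum w V)).
Proof.
  revert V. induction w as [|a w IH]; intros V; destruct V as [|v V]; simpl; try (f_equal; ring).
  rewrite IH. simpl. f_equal; ring.
Qed.

Lemma sum_scale k w : fold_right Rplus 0 (map (fun a => k * a) w) = k * fold_right Rplus 0 w.
Proof. induction w; simpl. ring. rewrite IHw. ring. Qed.

Lemma conv_hull_nonempty v V : exists q, conv_hull (v :: V) q.
Proof.
  exists (wsum (1 :: repeat 0 (length V)) (v :: V)). eexists.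
  split. 2: split. 3: split. 4: reflexivity.
  - simpl. rewrite repeat_length. auto.
  - constructor. lra. induction V; simpl; auto. constructor; auto; lra.
  - simpl. induction V; simpl. ring. lra.
Qed.

Lemma conv_hull_cons v V p : V <> [] -> (conv_hull (v :: V) p <->
  exists l q, 0 <= l <= 1 /\ conv_hull V q /\ p = comb l v q).
Proof.
  intros HV. split.
  - intros [w [HL [HN [HS E]]]]. destruct w as [|a w]; simpl in HL; try discriminate.
    injection HL; intro HL'. inversion HN; subst. simpl in HS.
    pose proof (sum_nonneg _ H2).
    destruct (Req_dec a 1) as [Ha|Ha].
    + destruct V as [|v0 V0]; [congruence|]. destruct (conv_hull_nonempty v0 V0) as [q Hq].
      exists 0, q. split. lra. split; auto. simpl.
      rewrite (wsum_zero w (v0 :: V0)) by (auto; lra).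
      subst a. unfold comb; simpl. f_equal; ring.
    + set (l := 1 - a). assert (Hl : 0 < l) by (unfold l; lra).
      exists l, (wsum (map (fun b => / l * b) w) V). split. unfold l; lra. split.
      * exists (map (fun b => / l * b) w). split. rewrite length_map; auto. split.
        apply Forall_map. eapply Forall_impl; [|exact H2]. intros b Hb. simpl.
        apply Rmult_le_pos; auto. left; apply Rinv_0_lt_compat; auto.
        split; auto. rewrite sum_scale. unfold l. field_simplify_eq; [lra|]. unfold l in Hl; lra.
      * rewrite wsum_scale. simpl. unfold comb; simpl. f_equal; unfold l; field; lra.
  - intros [l [q [Hl [[w [HL [HN [HS E]]]] Ep]]]].
    exists ((1 - l) :: map (fun b => l * b) w). split. simpl. rewrite length_map, HL. auto.
    split. constructor. lra. apply Forall_map. eapply Forall_impl; [|exact HN].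
    intros b Hb. simpl. nra.
    split. simpl. rewrite sum_scale, HS. ring.
    simpl. rewrite wsum_scale. subst. unfold comb; simpl. f_equal.
Qed.

Lemma conv_hull_single v p : conv_hull [v] p <-> p = v.
Proof.
  split.
  - intros [w [HL [HN [HS E]]]]. destruct w as [|a [|]]; simpl in HL; try discriminate.
    simpl in HS. assert (a = 1) by lra. subst. destruct v. simpl. f_equal; ring.
  - intros ->. exists [1]. repeat split; simpl; auto. constructor; auto; lra. ring.
    destruct v; simpl; f_equal; ring.
Qed.

(* Minimise F over conv(v :: V) by first minimising along each segment [v, q]
   (a continuous function on [0, 1]); the segment minimum is again Lipschitz in q,
   so induction on V applies. *)
Lemma conv_hull_attains_min V : V <> [] -> attains_min (conv_hull V).
Proof.
  induction V as [|v V IH]; intros HV F L HL HF; [congruence|].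
  destruct V as [|v' V'].
  - exists v. split. apply conv_hull_single; auto.
    intros q Hq. apply conv_hull_single in Hq. subst; lra.
  - assert (HV' : v' :: V' <> []) by congruence.
    assert (Ex : forall q, exists mx, (forall c, 0 <= c <= 1 -> F (comb mx v q) <= F (comb c v q))
                                      /\ 0 <= mx <= 1).
    { intro q. apply (continuity_ab_min (fun l => F (comb l v q)) 0 1). lra.
      intros c _. apply (lip_continuity _ (L * dist2 v q)). pose proof (dist2_nonneg v q); nra.
      intros x y. eapply Rle_trans. apply HF. rewrite dist2_comb_same. right; ring. }
    set (lam := fun q => proj1_sig (constructive_indefinite_description _ (Ex q))).
    assert (Hlam : forall q, (forall c, 0 <= c <= 1 -> F (comb (lam q) v q) <= F (comb c v q))
                             /\ 0 <= lam q <= 1).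
    { intro q. unfold lam. destruct (constructive_indefinite_description _ (Ex q)); simpl. auto. }
    set (f := fun q => F (comb (lam q) v q)).
    assert (Hf : lipschitz_fun f L).
    { assert (H1 : forall q q', f q' <= f q + L * dist2 q q').
      { intros q q'. unfold f. destruct (Hlam q') as [A1 _]. destruct (Hlam q) as [_ A2].
        eapply Rle_trans. apply (A1 (lam q) A2).
        pose proof (HF (comb (lam q) v q') (comb (lam q) v q)). rewrite dist2_comb_r in H.
        rewrite (Rabs_right (lam q)) in H by lra. rewrite dist2_sym in H.
        pose proof (dist2_nonneg q q').
        pose proof (Rle_abs (F (comb (lam q) v q') - F (comb (lam q) v q))).
        assert (L * (lam q * dist2 q q') <= L * dist2 q q') by (apply Rmult_le_compat_l; nra). lra. }
      intros q q'. apply Rabs_le. pose proof (H1 q q'). pose proof (H1 q' q).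
      rewrite dist2_sym in H0. lra. }
    destruct (IH HV' f L HL Hf) as [q0 [Hq0 Hmin]].
    exists (comb (lam q0) v q0). split.
    + apply conv_hull_cons; auto. exists (lam q0), q0. split. apply Hlam. auto.
    + intros p Hp. apply conv_hull_cons in Hp; auto. destruct Hp as [l [q [Hl [Hq ->]]]].
      eapply Rle_trans. apply (Hmin q Hq). unfold f. apply Hlam. auto.
Qed.

Lemma interior_in S p : interior S p -> S p.
Proof. intros [e [He H]]. apply H. rewrite dist2_refl. auto. Qed.

Lemma convex_polygon_props S : convex_polygon S ->
  convex S /\ attains_min S /\ exists c, interior S c.
Proof.
  intros [V [HV [c Hc]]]. split; [|split].
  - intros p q th Hth Hp Hq. apply HV. apply conv_hull_convex; auto; apply HV; auto.
  - intros F L HL HF. assert (V <> []).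
    { intro E. subst. apply interior_in in Hc. apply HV in Hc. destruct Hc as [w [Hw [_ [Hs _]]]].
      destruct w; simpl in *; try discriminate. lra. }
    destruct (conv_hull_attains_min V H F L HL HF) as [p [Hp Hm]]. exists p. split. apply HV; auto.
    intros q Hq. apply Hm. apply HV; auto.
  - exists c; auto.
Qed.
Lemma dist_lipschitz x : lipschitz_fun (fun p => dist2 x p) 1.
Proof.
  intros p q. apply Rabs_le. pose proof (dist2_triangle x p q). pose proof (dist2_triangle x q p).
  rewrite (dist2_sym q p) in H0. lra.
Qed.

Definition nearest (S : pset) (x p : pt) := S p /\ forall q, S q -> dist2 x p <= dist2 x q.

Lemma nearest_exists S x : attains_min S -> exists p, nearest S x p.
Proof. intro HM. apply (HM (fun p => dist2 x p) 1). lra. apply dist_lipschitz. Qed.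

(* A set attaining minima of Lipschitz functions is closed: the distance to a
   point of its closure is minimised at distance 0. *)
Lemma attains_min_closed S x : attains_min S -> closure S x -> S x.
Proof.
  intros HM Hx. destruct (nearest_exists S x HM) as [p [Sp Mp]].
  assert (dist2 x p = 0).
  { apply Rle_antisym; [|apply dist2_nonneg]. apply Rnot_lt_le. intro Hlt.
    destruct (Hx _ Hlt) as [q [Sq Dq]]. specialize (Mp q Sq). lra. }
  apply dist2_eq0 in H. rewrite H. auto.
Qed.

Definition inner (x p q : pt) := (fst x - fst p) * (fst q - fst p) + (snd x - snd p) * (snd q - snd p).

Lemma nearest_obtuse S x p : convex S -> nearest S x p -> forall q, S q -> inner x p q <= 0.
Proof.
  intros HC [Hp Hm] q Hq. apply Rnot_lt_le. intro Hk. set (k := inner x p q) in *.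
  set (s := sqdist q p). assert (Hs : 0 <= s) by apply sqdist_nonneg.
  set (th := Rmin 1 (k / (s + 1))).
  assert (Hth0 : 0 < th). { unfold th. apply Rmin_glb_lt. lra. apply Rdiv_lt_0_compat; lra. }
  assert (Hth1 : th <= 1) by (unfold th; apply Rmin_l).
  assert (Hth2 : th * s < 2 * k).
  { assert (th <= k / (s + 1)) by (unfold th; apply Rmin_r).
    assert (k / (s + 1) * s < 2 * k).
    { unfold Rdiv. apply Rmult_lt_reg_r with (s + 1). lra.
      replace (k * / (s + 1) * s * (s + 1)) with (k * s) by (field; lra). nra. }
    nra. }
  pose proof (sqdist_mono _ _ _ _ (Hm _ (HC p q th ltac:(lra) Hp Hq))).
  assert (Hid : sqdist x (comb th p q) = sqdist x p - 2 * th * k + th * th * s).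
  { unfold s, k. unfold sqdist, inner, comb. simpl. ring. }
  rewrite Hid in H.
  assert (th * (th * s - 2 * k) < 0).
  { replace 0 with (th * 0) by ring. apply Rmult_lt_compat_l; lra. }
  lra.
Qed.

Lemma nearest_nonexpansive S x y px py : convex S -> nearest S x px -> nearest S y py ->
  dist2 px py <= dist2 x y.
Proof.
  intros HC Nx Ny.
  pose proof (nearest_obtuse S x px HC Nx py (proj1 Ny)) as V1.
  pose proof (nearest_obtuse S y py HC Ny px (proj1 Nx)) as V2.
  apply dist2_le_sq. apply dist2_nonneg. rewrite dist2_sq.
  set (A := sqdist px py). set (C := sqdist x y).
  set (B := (fst x - fst y) * (fst px - fst py) + (snd x - snd y) * (snd px - snd py)).
  assert (HAB : A <= B).
  { assert (inner x px py + inner y py px = A - B) by (unfold inner, A, B, sqdist; ring). lra. }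
  assert (HCS : B * B <= C * A).
  { assert (C * A - B * B = ((fst x - fst y) * (snd px - snd py) - (snd x - snd y) * (fst px - fst py)) ^ 2)
      by (unfold A, B, C, sqdist; ring).
    pose proof (pow2_ge_0 ((fst x - fst y) * (snd px - snd py) - (snd x - snd y) * (fst px - fst py))).
    lra. }
  assert (HA : 0 <= A) by apply sqdist_nonneg.
  assert (HC0 : 0 <= C) by apply sqdist_nonneg.
  destruct (Req_dec A 0) as [E|E]. rewrite E. lra.
  assert (A * A <= C * A) by nra.
  apply Rmult_le_reg_r with A; lra.
Qed.

(* The nearest point to an outside point x is not interior: moving from it a
   little towards x would stay in S and get closer to x. *)
Lemma nearest_not_interior S x p : nearest S x p -> ~ S x -> ~ interior S p.
Proof.
  intros [Sp Mx] Hx [e [He Hin]]. set (d := dist2 x p).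
  assert (Hd : 0 < d).
  { destruct (dist2_nonneg x p) as [H|H]; auto. exfalso. apply Hx.
    symmetry in H. apply dist2_eq0 in H. rewrite H. auto. }
  set (th := Rmin (1/2) (e / (2 * (d + 1)))).
  assert (Hth0 : 0 < th). { unfold th. apply Rmin_glb_lt. lra. apply Rdiv_lt_0_compat; lra. }
  assert (Hth1 : th <= 1/2) by (unfold th; apply Rmin_l).
  assert (Hth2 : th * d < e).
  { assert (th <= e / (2 * (d + 1))) by (unfold th; apply Rmin_r).
    assert (e / (2 * (d + 1)) * d < e).
    { unfold Rdiv. apply Rmult_lt_reg_r with (2 * (d + 1)). lra.
      replace (e * / (2 * (d + 1)) * d * (2 * (d + 1))) with (e * d) by (field; lra). nra. }
    nra. }
  assert (Sq : S (comb th p x)).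
  { apply Hin. rewrite dist2_comb_end, Rabs_right by lra. rewrite dist2_sym. unfold d in Hth2. lra. }
  specialize (Mx _ Sq). rewrite comb_swap, dist2_comb_end, Rabs_right in Mx by lra.
  fold d in Mx. nra.
Qed.

Lemma projection_exists S : convex S -> attains_min S -> exists pi : pt -> pt,
  (forall x, S (pi x)) /\ (forall x y, dist2 (pi x) (pi y) <= dist2 x y) /\
  (forall x, S x -> pi x = x) /\ (forall x, ~ S x -> ~ interior S (pi x)).
Proof.
  intros HC HM.
  set (pi := fun x => proj1_sig (constructive_indefinite_description _ (nearest_exists S x HM))).
  assert (Hpi : forall x, nearest S x (pi x)).
  { intro x. unfold pi. destruct (constructive_indefinite_description _ _); simpl; auto. }
  exists pi. split; [|split; [|split]].
  - intro x; apply Hpi.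
  - intros x y. apply nearest_nonexpansive with S; auto.
  - intros x Hx. destruct (Hpi x) as [_ H]. specialize (H x Hx). rewrite dist2_refl in H.
    pose proof (dist2_nonneg x (pi x)). symmetry. apply dist2_eq0. lra.
  - intros x Hx. apply (nearest_not_interior S x); auto.
Qed.
Lemma interior_comb S a b th : convex S -> 0 <= th <= 1 -> interior S a -> interior S b ->
  interior S (comb th a b).
Proof.
  intros HC Hth [e1 [He1 H1]] [e2 [He2 H2]]. exists (Rmin e1 e2). split.
  apply Rmin_glb_lt; auto.
  intros z Hz. set (c := comb th a b) in *.
  (* translate the segment [a, b] by z - c *)
  set (a' := (fst a + (fst z - fst c), snd a + (snd z - snd c))).
  set (b' := (fst b + (fst z - fst c), snd b + (snd z - snd c))).
  assert (E : forall u, dist2 u (fst u + (fst z - fst c), snd u + (snd z - snd c)) = dist2 c z).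
  { intro u. unfold dist2. simpl. f_equal. ring. }
  replace z with (comb th a' b').
  apply HC; auto. apply H1. unfold a'. rewrite E. pose proof (Rmin_l e1 e2). lra.
  apply H2. unfold b'. rewrite E. pose proof (Rmin_r e1 e2). lra.
  unfold a', b', c, comb. destruct z. simpl. f_equal; ring.
Qed.

Definition in_box (c : pt) (B : R) (z : pt) :=
  Rabs (fst z - fst c) <= B /\ Rabs (snd z - snd c) <= B.

Lemma box_dist c B p q : in_box c B p -> in_box c B q -> dist2 p q <= 4 * B.
Proof.
  intros [H1 H2] [H3 H4]. eapply Rle_trans. apply dist2_le_abs.
  replace (fst p - fst q) with ((fst p - fst c) - (fst q - fst c)) by ring.
  replace (snd p - snd q) with ((snd p - snd c) - (snd q - snd c)) by ring.
  assert (T : forall a b, Rabs (a - b) <= Rabs a + Rabs b).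
  { intros a b. unfold Rminus. rewrite <- (Rabs_Ropp b). apply Rabs_triang. }
  pose proof (T (fst p - fst c) (fst q - fst c)). pose proof (T (snd p - snd c) (snd q - snd c)). lra.
Qed.

Lemma box_segment (S : pset) c B p q : 0 < B -> in_box c B p -> in_box c B q ->
  (forall th, 0 <= th <= 1 -> S (comb th p q)) -> lip_path S (fun t => comb t p q) (4 * B) p q.
Proof.
  intros HB Hp Hq HS. apply lip_path_weaken with (dist2 p q). apply box_dist with c; auto.
  apply segment_path; auto.
Qed.

Lemma Rabs_shift a b : Rabs (a + b - a) = Rabs b.
Proof. f_equal. ring. Qed.

Section Detour.
Variable K : pset.
Variable d : R.
Variable c : pt.
Hypothesis HC : convex K.
Hypothesis Hd : 0 < d.
Hypothesis Hc : interior K c.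
Hypothesis Hdiam : forall p q, K p -> K q -> dist2 p q <= d.

(* The complement of the interior of K, where the detour travels. *)
Let O := fun z => ~ interior K z.
Let R0 := 2 * d.
Let T : pt := (fst c, snd c + 3 * R0).

Lemma far_out z : R0 <= Rabs (fst z - fst c) \/ R0 <= Rabs (snd z - snd c) -> O z.
Proof.
  intros H Hi. apply interior_in in Hi. pose proof (Hdiam _ _ Hi (interior_in _ _ Hc)).
  unfold R0 in H. destruct H as [H|H].
  - pose proof (abs_le_dist2_x z c). lra.
  - pose proof (abs_le_dist2_y z c). lra.
Qed.

Lemma box_T : in_box c (6 * d) T.
Proof.
  unfold T, in_box, R0; simpl. split.
  - replace (fst c - fst c) with 0 by ring. rewrite Rabs_R0; lra.
  - rewrite Rabs_shift, Rabs_right; lra.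
Qed.

Lemma top_edge_out q th : snd q = snd c + 3 * R0 -> O (comb th q T).
Proof.
  intros Hq. apply far_out. right. unfold comb, T; simpl. rewrite Hq.
  replace ((1 - th) * (snd c + 3 * R0) + th * (snd c + 3 * R0) - snd c) with (3 * R0) by ring.
  rewrite Rabs_right; unfold R0; lra.
Qed.

(* From a point of the square of half-width R0 on its left, right or top side:
   go straight up to the top edge of the big square, then along it to T. *)
Lemma reach_T_up p : in_box c R0 p ->
  R0 <= Rabs (fst p - fst c) \/ R0 <= snd p - snd c -> exists g, lip_path O g (72 * d) p T.
Proof.
  intros [Bx By] Hfar. set (q := (fst p, snd c + 3 * R0)).
  assert (Bp : in_box c (6 * d) p) by (split; unfold R0 in *; lra).
  assert (Bq : in_box c (6 * d) q).
  { unfold q, in_box; simpl; split; [unfold R0 in *; lra|].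
    rewrite Rabs_shift, Rabs_right; unfold R0; lra. }
  assert (S1 : lip_path O (fun t => comb t p q) (4 * (6 * d)) p q).
  { apply box_segment with c; auto; try lra. intros th Hth. apply far_out. unfold comb, q; simpl.
    destruct Hfar as [H|H].
    - left. replace ((1 - th) * fst p + th * fst p - fst c) with (fst p - fst c) by ring. auto.
    - right. apply Rabs_le_inv in By. rewrite Rabs_right; unfold R0 in *; nra. }
  assert (S2 : lip_path O (fun t => comb t q T) (4 * (6 * d)) q T).
  { apply box_segment with c; auto; try lra. apply box_T. intros th _. apply top_edge_out; auto. }
  eexists. apply lip_path_weaken with (4 * (6 * d) + 4 * (6 * d)); [lra|].
  assert (H24 : 0 < 4 * (6 * d)) by lra. exact (concat_path _ _ _ _ _ _ _ _ H24 H24 S1 S2).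
Qed.

(* From a point on the bottom side: go right to the big square, up, then left to T. *)
Lemma reach_T_below p : in_box c R0 p -> snd p - snd c = - R0 ->
  exists g, lip_path O g (72 * d) p T.
Proof.
  intros [Bx By] Hy.
  set (q1 := (fst c + 3 * R0, snd p)). set (q2 := (fst c + 3 * R0, snd c + 3 * R0)).
  assert (Bp : in_box c (6 * d) p) by (split; unfold R0 in *; lra).
  assert (B1 : in_box c (6 * d) q1).
  { unfold q1, in_box; simpl. rewrite Rabs_shift, Hy, Rabs_Ropp, !Rabs_right; unfold R0; lra. }
  assert (B2 : in_box c (6 * d) q2).
  { unfold q2, in_box; simpl. rewrite !Rabs_shift. rewrite Rabs_right; unfold R0; lra. }
  assert (S1 : lip_path O (fun t => comb t p q1) (4 * (6 * d)) p q1).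
  { apply box_segment with c; auto; try lra. intros th Hth. apply far_out. right. unfold comb, q1; simpl.
    replace ((1 - th) * snd p + th * snd p - snd c) with (snd p - snd c) by ring.
    rewrite Hy, Rabs_Ropp, Rabs_right; unfold R0; lra. }
  assert (S2 : lip_path O (fun t => comb t q1 q2) (4 * (6 * d)) q1 q2).
  { apply box_segment with c; auto; try lra. intros th Hth. apply far_out. left. unfold comb, q1, q2; simpl.
    replace ((1 - th) * (fst c + 3 * R0) + th * (fst c + 3 * R0) - fst c) with (3 * R0) by ring.
    rewrite Rabs_right; unfold R0; lra. }
  assert (S3 : lip_path O (fun t => comb t q2 T) (4 * (6 * d)) q2 T).
  { apply box_segment with c; auto; try lra. apply box_T. intros th _. apply top_edge_out; auto. }
  replace (72 * d) with (4 * (6 * d) + (4 * (6 * d) + 4 * (6 * d))) by ring.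
  assert (H24 : 0 < 4 * (6 * d)) by lra. exact (concat3_path _ _ _ _ _ _ _ _ _ _ _ H24 H24 H24 S1 S2 S3).
Qed.

Lemma reach_T p : in_box c R0 p ->
  R0 <= Rabs (fst p - fst c) \/ R0 <= Rabs (snd p - snd c) -> exists g, lip_path O g (72 * d) p T.
Proof.
  intros Bp Hfar.
  destruct (Rle_dec R0 (Rabs (fst p - fst c))) as [H|H]; [apply reach_T_up; auto|].
  destruct (Rle_dec R0 (snd p - snd c)) as [H'|H']; [apply reach_T_up; auto|].
  apply reach_T_below; auto. destruct Bp as [_ By]. destruct Hfar as [Hf|Hf]; [lra|].
  apply Rabs_le_inv in By. unfold Rabs in Hf; destruct Rcase_abs in Hf; lra.
Qed.

(* Push a boundary point a of K radially away from c onto the square of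
   half-width R0; the segment never meets int K, for otherwise a would be a
   convex combination of c and an interior point. *)
Lemma push_to_square a : K a -> O a -> exists a', in_box c R0 a' /\
  (R0 <= Rabs (fst a' - fst c) \/ R0 <= Rabs (snd a' - snd c)) /\
  lip_path O (fun t => comb t a a') (4 * (6 * d)) a a'.
Proof.
  intros Ka Oa.
  set (m := Rmax (Rabs (fst a - fst c)) (Rabs (snd a - snd c))).
  assert (Hm1 : Rabs (fst a - fst c) <= m) by apply Rmax_l.
  assert (Hm2 : Rabs (snd a - snd c) <= m) by apply Rmax_r.
  assert (Hmd : m <= d).
  { pose proof (Hdiam _ _ Ka (interior_in _ _ Hc)). pose proof (abs_le_dist2_x a c).
    pose proof (abs_le_dist2_y a c). unfold m. apply Rmax_lub; lra. }
  assert (Hm0 : 0 < m).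
  { destruct (Rle_lt_dec m 0) as [H|H]; auto. exfalso. apply Oa.
    replace a with c; auto.
    pose proof (Rabs_pos (fst a - fst c)). pose proof (Rabs_pos (snd a - snd c)).
    apply dist2_eq0. apply Rle_antisym; [|apply dist2_nonneg].
    rewrite dist2_sym. pose proof (dist2_le_abs a c). lra. }
  set (k := R0 / m). assert (Hk : 2 <= k).
  { unfold k, R0. apply Rmult_le_reg_r with m; auto. unfold Rdiv. rewrite Rmult_assoc, Rinv_l by lra. lra. }
  set (a' := (fst c + k * (fst a - fst c), snd c + k * (snd a - snd c))).
  assert (Eabs : forall x, Rabs (k * x) = k * Rabs x) by (intro x; rewrite Rabs_mult, Rabs_right; lra).
  assert (Hkm : k * m = R0) by (unfold k; field; lra).
  assert (Ex : Rabs (fst a' - fst c) = k * Rabs (fst a - fst c)) by (unfold a'; simpl; rewrite Rabs_shift; auto).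
  assert (Ey : Rabs (snd a' - snd c) = k * Rabs (snd a - snd c)) by (unfold a'; simpl; rewrite Rabs_shift; auto).
  exists a'. split; [|split].
  - split; rewrite ?Ex, ?Ey; nra.
  - rewrite Ex, Ey. unfold m in Hkm.
    destruct (Rle_dec (Rabs (fst a - fst c)) (Rabs (snd a - snd c))) as [H|H].
    + right. rewrite Rmax_right in Hkm by lra. lra.
    + left. rewrite Rmax_left in Hkm by lra. lra.
  - apply box_segment with c. lra. split; lra. split; rewrite ?Ex, ?Ey; unfold R0 in *; nra.
    intros th Hth Hi. apply Oa.
    set (kk := 1 + th * (k - 1)). assert (Hkk : 1 <= kk) by (unfold kk; nra).
    replace a with (comb (/ kk) c (comb th a a')).
    + apply interior_comb; auto. split. left; apply Rinv_0_lt_compat; lra.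
      rewrite <- Rinv_1. apply Rinv_le_contravar; lra.
    + unfold comb, a'. destruct a as [a1 a2]; simpl. unfold kk in *. f_equal; field; lra.
Qed.

Lemma boundary_to_T a : K a -> O a -> exists g, lip_path O g (4 * (6 * d) + 72 * d) a T.
Proof.
  intros Ka Oa. destruct (push_to_square a Ka Oa) as [a' [Ba' [Fa' S1]]].
  destruct (reach_T a' Ba' Fa') as [g2 G2].
  assert (H24 : 0 < 4 * (6 * d)) by lra. assert (H72 : 0 < 72 * d) by lra.
  eexists. exact (concat_path _ _ _ _ _ _ _ _ H24 H72 S1 G2).
Qed.

Hypothesis HM : attains_min K.

(* Any two boundary points of K are joined along the boundary of K by a path of
   length <= 192 d: join both to T outside int K, then project onto K. *)
Lemma boundary_detour a b : K a -> O a -> K b -> O b ->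
  exists g, lip_path (fun z => K z /\ O z) g (192 * d) a b.
Proof.
  intros Ka Oa Kb Ob.
  destruct (boundary_to_T a Ka Oa) as [g1 G1]. destruct (boundary_to_T b Kb Ob) as [g2 G2].
  apply reverse_path in G2.
  assert (Hpos : 0 < 4 * (6 * d) + 72 * d) by lra.
  destruct (concat_path _ _ _ _ _ _ _ _ Hpos Hpos G1 G2) as [L1 [L2 [L3 L4]]].
  set (s := path_concat _ _ _) in *.
  destruct (projection_exists K HC HM) as [pi [P1 [P2 [P3 P4]]]].
  exists (fun t => pi (s t)). repeat split.
  - intros u t Hu Ht. eapply Rle_trans. apply P2. replace (192 * d) with
      (4 * (6 * d) + 72 * d + (4 * (6 * d) + 72 * d)) by ring. apply L1; auto.
  - apply P1.
  - destruct (classic (K (s t))) as [HK|HK].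
    + rewrite P3 by auto. apply L2; auto.
    + apply P4; auto.
  - rewrite L3. apply P3; auto.
  - rewrite L4. apply P3; auto.
Qed.
End Detour.

Definition is_glb (A : R -> Prop) (m : R) :=
  (forall u, A u -> m <= u) /\ (forall m', (forall u, A u -> m' <= u) -> m' <= m).

Lemma lub_exists (A : R -> Prop) M : (forall u, A u -> u <= M) -> (exists u, A u) ->
  exists m, is_lub A m.
Proof. intros HM Hne. destruct (completeness A) as [m Hm]; [exists M; exact HM|exact Hne|eauto]. Qed.

Lemma glb_exists (A : R -> Prop) M : (forall u, A u -> M <= u) -> (exists u, A u) ->
  exists m, is_glb A m.
Proof.
  intros HM [u0 Hu0]. destruct (lub_exists (fun x => A (- x)) (- M)) as [m [H1 H2]].
  - intros u Hu. specialize (HM _ Hu). lra.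
  - exists (- u0). rewrite Ropp_involutive. auto.
  - exists (- m). split.
    + intros u Hu. assert (A (- - u)) by (rewrite Ropp_involutive; auto). specialize (H1 _ H). lra.
    + intros m' Hm'. assert (m <= - m'). apply H2. intros u Hu. specialize (Hm' _ Hu). lra. lra.
Qed.

Lemma glb_in_closure K s v A m : (forall u, A u -> K (comb u s v)) -> is_glb A m ->
  closure K (comb m s v).
Proof.
  intros HA [Hlow Hgreat] e He. destruct (comb_near s v m e He) as [r [Hr Hnear]].
  destruct (classic (exists u, A u /\ u < m + r)) as [[u [Au Hu]]|Hn].
  - exists (comb u s v). split; auto. apply Hnear. pose proof (Hlow _ Au).
    rewrite Rabs_right; lra.
  - assert (m + r <= m); [|lra]. apply Hgreat. intros u Au.
    apply Rnot_lt_le. intro. apply Hn. eauto.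
Qed.

Lemma lub_in_closure K s v A m : (forall u, A u -> K (comb u s v)) -> is_lub A m ->
  closure K (comb m s v).
Proof.
  intros HA [Hup Hleast] e He. destruct (comb_near s v m e He) as [r [Hr Hnear]].
  destruct (classic (exists u, A u /\ m - r < u)) as [[u [Au Hu]]|Hn].
  - exists (comb u s v). split; auto. apply Hnear. pose proof (Hup _ Au).
    rewrite Rabs_left1; lra.
  - assert (m <= m - r); [|lra]. apply Hleast. intros u Au.
    apply Rnot_lt_le. intro. apply Hn. eauto.
Qed.

Lemma glb_not_interior K s v A m lo : lo < m ->
  (forall u, lo < u < m -> K (comb u s v) -> A u) -> is_glb A m -> ~ interior K (comb m s v).
Proof.
  intros Hlo HA [Hlow _] [e [He Hball]]. destruct (comb_near s v m e He) as [r [Hr Hnear]].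
  set (w := m - Rmin (m - lo) r / 2).
  assert (0 < Rmin (m - lo) r) by (apply Rmin_glb_lt; lra).
  pose proof (Rmin_l (m - lo) r). pose proof (Rmin_r (m - lo) r).
  assert (Aw : A w).
  { apply HA. unfold w; lra. apply Hball, Hnear. unfold w. rewrite Rabs_left1; lra. }
  pose proof (Hlow _ Aw). unfold w in *; lra.
Qed.

Lemma lub_not_interior K s v A m hi : m < hi ->
  (forall u, m < u < hi -> K (comb u s v) -> A u) -> is_lub A m -> ~ interior K (comb m s v).
Proof.
  intros Hhi HA [Hup _] [e [He Hball]]. destruct (comb_near s v m e He) as [r [Hr Hnear]].
  set (w := m + Rmin (hi - m) r / 2).
  assert (0 < Rmin (hi - m) r) by (apply Rmin_glb_lt; lra).
  pose proof (Rmin_l (hi - m) r). pose proof (Rmin_r (hi - m) r).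
  assert (Aw : A w).
  { apply HA. unfold w; lra. apply Hball, Hnear. unfold w. rewrite Rabs_right; lra. }
  pose proof (Hup _ Aw). unfold w in *; lra.
Qed.

Lemma list_argmin (l : list nat) (P : nat -> Prop) (Q : nat -> R -> Prop) :
  (forall j, P j -> exists a, Q j a) -> (forall j a a', Q j a -> Q j a' -> a = a') ->
  (exists j, In j l /\ P j) ->
  exists i a, In i l /\ P i /\ Q i a /\ forall j a', In j l -> P j -> Q j a' -> a <= a'.
Proof.
  intros HQ HU. induction l as [|k l IH]; intros [j [Hj Pj]]; [destruct Hj|].
  destruct (classic (exists j, In j l /\ P j)) as [Hex|Hnex].
  - destruct (IH Hex) as [i [a [Hi [Pi [Qi Hmin]]]]].
    destruct (classic (P k)) as [Pk|Pk].
    + destruct (HQ k Pk) as [b Qb].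
      destruct (Rle_dec a b) as [Hab|Hab].
      * exists i, a. split. right; auto. split; auto. split; auto.
        intros j' a' [E|Hj'] Pj' Qj'. subst j'. rewrite (HU k a' b); auto. apply (Hmin j'); auto.
      * exists k, b. split. left; auto. split; auto. split; auto.
        intros j' a' [E|Hj'] Pj' Qj'. subst j'. rewrite (HU k a' b); auto. lra.
        specialize (Hmin j' a' Hj' Pj' Qj'). lra.
    + exists i, a. split. right; auto. split; auto. split; auto.
      intros j' a' [E|Hj'] Pj' Qj'. subst; contradiction. apply (Hmin j'); auto.
  - destruct Hj as [E|Hj]; [|exfalso; apply Hnex; exists j; auto]. subst k.
    destruct (HQ j Pj) as [b Qb]. exists j, b. split. left; auto. split; auto. split; auto.
    intros j' a' [E|Hj'] Pj' Qj'. subst j'. rewrite (HU j a' b); auto. lra.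
    exfalso; apply Hnex; exists j'; auto.
Qed.

Section Walk.
Variable h : nat.
Variable P0 : pset.
Variable Ph : nat -> pset.
Variables s v : pt.
Variable dl : R.
Hypothesis CP0 : convex P0.
Hypothesis Ps : P0 s.
Hypothesis Pv : P0 v.
Hypothesis Nv : ~ interior P0 v.
Hypothesis Holes : forall i, (i < h)%nat ->
  convex (Ph i) /\ attains_min (Ph i) /\ (exists c, interior (Ph i) c) /\
  (forall p q, Ph i p -> Ph i q -> dist2 p q <= dl).
Hypothesis Disj : forall i j, (i < h)%nat -> (j < h)%nat -> i <> j ->
  forall p, Ph i p -> Ph j p -> False.
Hypothesis Inside : forall i, (i < h)%nat -> forall p, Ph i p -> interior P0 p.
Hypothesis Hdl : 0 < dl.

Let Dom := domain h P0 Ph.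

Definition clear (t : R) := forall j, (j < h)%nat -> ~ interior (Ph j) (comb t s v).

Definition hits (i : nat) (t u : R) := t < u <= 1 /\ Ph i (comb u s v).

Lemma hole_boundary_in_domain i z : (i < h)%nat -> Ph i z -> ~ interior (Ph i) z -> Dom z.
Proof.
  intros Hi Pz Nz. split. apply interior_in, (Inside i Hi z Pz).
  intros j Hj. destruct (Nat.eq_dec j i) as [->|Hji]; auto.
  intro Hint. apply (Disj j i Hj Hi Hji z); auto. apply interior_in; auto.
Qed.

(* A straight piece of the walk; the slack dl keeps the Lipschitz constant positive. *)
Lemma straight_run t w : 0 <= t <= w -> w <= 1 ->
  (forall u, t <= u <= w -> clear u) ->
  lip_path Dom (fun th => comb th (comb t s v) (comb w s v))
    ((w - t) * dist2 s v + dl) (comb t s v) (comb w s v).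
Proof.
  intros Ht Hw HC. apply lip_path_weaken with (dist2 (comb t s v) (comb w s v)).
  - rewrite dist2_comb_same, Rabs_left1 by lra. pose proof (dist2_nonneg s v). nra.
  - apply segment_path. intros th Hth. rewrite comb_comb.
    split. apply CP0; auto; nra. apply HC. nra.
Qed.

Lemma hole_jump i a b : (i < h)%nat -> Ph i a -> ~ interior (Ph i) a ->
  Ph i b -> ~ interior (Ph i) b -> exists g, lip_path Dom g (192 * dl) a b.
Proof.
  intros Hi Pa Na Pb Nb. destruct (Holes i Hi) as [HC [HM [[c Hc] Hd]]].
  destruct (boundary_detour (Ph i) dl c HC Hdl Hc Hd HM a b Pa Na Pb Nb) as [g G].
  exists g. apply (lip_path_mono _ _ _ _ _ _ (fun z Hz => hole_boundary_in_domain i z Hi (proj1 Hz) (proj2 Hz)) G).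
Qed.

(* Crossing hole i: its first and last contact parameters a <= b after t give
   boundary points of the hole, and b < 1 since v is not interior to P0. *)
Lemma hole_crossing t i a b : (i < h)%nat -> clear t ->
  (exists u, hits i t u) -> is_glb (hits i t) a -> is_lub (hits i t) b ->
  t <= a <= b /\ b < 1 /\ Ph i (comb a s v) /\ ~ interior (Ph i) (comb a s v) /\
  Ph i (comb b s v) /\ ~ interior (Ph i) (comb b s v).
Proof.
  intros Hi Clt [u0 Hu0] Ha Hb.
  destruct (Holes i Hi) as [_ [HM _]].
  assert (Hta : t <= a) by (apply (proj2 Ha); intros u [Hu _]; lra).
  assert (Hab : a <= u0 <= b) by (split; [apply (proj1 Ha)|apply (proj1 Hb)]; auto).
  assert (Hb1 : b <= 1) by (apply (proj2 Hb); intros u [Hu _]; lra).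
  assert (Pa : Ph i (comb a s v)).
  { apply (attains_min_closed _ _ HM). apply (glb_in_closure _ s v (hits i t)); auto.
    intros u []; auto. }
  assert (Pb : Ph i (comb b s v)).
  { apply (attains_min_closed _ _ HM). apply (lub_in_closure _ s v (hits i t)); auto.
    intros u []; auto. }
  assert (Hb1s : b < 1).
  { destruct (Req_dec b 1) as [E|E]; [|lra]. exfalso. apply Nv.
    rewrite E, comb_1 in Pb. apply (Inside i Hi); auto. }
  repeat split; auto; try lra.
  - destruct (Req_dec a t) as [->|E]; [apply Clt; auto|].
    apply (glb_not_interior _ s v (hits i t) a t); auto; [lra|]. intros u Hu Pu. split; auto; lra.
  - apply (lub_not_interior _ s v (hits i t) b 1); auto. intros u Hu Pu. split; auto; destruct Hu as [H1 H2].
    split; [lra|lra].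
Qed.

Lemma clear_before_contact t a l : clear t ->
  (forall j, (j < h)%nat -> (exists u, hits j t u) -> In j l) ->
  (forall j a', In j l -> (j < h)%nat /\ (exists u, hits j t u) -> is_glb (hits j t) a' -> a <= a') ->
  a <= 1 -> forall u, t <= u < a -> clear u.
Proof.
  intros Clt Cover Hmin Ha1 u Hu j Hj Hint.
  destruct (Req_dec u t) as [->|E]; [exact (Clt j Hj Hint)|].
  assert (Huj : hits j t u) by (split; [lra|apply interior_in; auto]).
  destruct (glb_exists (hits j t) t) as [m Hm]; [intros w [Hw _]; lra|eauto|].
  assert (a <= m) by (apply (Hmin j m); [apply Cover| |]; eauto).
  pose proof (proj1 Hm u Huj). lra.
Qed.

Lemma free_run t : 0 <= t <= 1 -> clear t -> (forall j u, (j < h)%nat -> ~ hits j t u) ->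
  lip_path Dom (fun th => comb th (comb t s v) v) ((1 - t) * dist2 s v + dl) (comb t s v) v.
Proof.
  intros Ht Clt Hno. assert (S : forall u, t <= u <= 1 -> clear u).
  { intros u Hu j Hj Hint. destruct (Req_dec u t) as [->|E]; [exact (Clt j Hj Hint)|].
    apply (Hno j u Hj). split; [lra|apply interior_in; auto]. }
  pose proof (straight_run t 1 ltac:(lra) ltac:(lra) S) as R. rewrite comb_1 in R. exact R.
Qed.

(* The walk from comb t s v to v when at most n holes remain ahead (listed in l):
   each hole costs a straight run, a jump of length 192 dl, and slack dl. *)
Lemma walk n : forall t l, 0 <= t <= 1 -> clear t ->
  (forall j, (j < h)%nat -> (exists u, hits j t u) -> In j l) -> (length l <= n)%nat ->
  exists g, lip_path Dom g ((1 - t) * dist2 s v + (INR n + 1) * (193 * dl)) (comb t s v) v.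
Proof.
  pose proof (dist2_nonneg s v) as Hl0.
  assert (Free : forall m t l, 0 <= t <= 1 -> clear t ->
    (forall j, (j < h)%nat -> (exists u, hits j t u) -> In j l) ->
    ~ (exists j, In j l /\ (j < h)%nat /\ exists u, hits j t u) ->
    exists g, lip_path Dom g ((1 - t) * dist2 s v + (INR m + 1) * (193 * dl)) (comb t s v) v).
  { intros m t l Ht Clt Cover Hnex. eexists.
    apply lip_path_weaken with ((1 - t) * dist2 s v + dl); [pose proof (pos_INR m); nra|].
    apply free_run; auto. intros j u Hj Hu. apply Hnex. exists j. split; eauto. }
  induction n as [|n IH]; intros t l Ht Clt Cover Hlen;
    (destruct (classic (exists j, In j l /\ ((j < h)%nat /\ exists u, hits j t u))) as [Hex|Hnex];
     [|eapply Free; eauto]).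
  { destruct l; [destruct Hex as [? [[] _]]|simpl in Hlen; lia]. }
  (* cross the hole i with the least first contact a, leaving it at b *)
  destruct (list_argmin l (fun j => (j < h)%nat /\ exists u, hits j t u) (fun j a => is_glb (hits j t) a))
    as [i [a [Hil [[Hih HAi] [Ha Hmin]]]]]; auto.
  { intros j [_ Hu]. apply (glb_exists _ t); auto. intros u [Hu' _]; lra. }
  { intros j a1 a2 [H1 H2] [H3 H4]. apply Rle_antisym; auto. }
  destruct (lub_exists (hits i t) 1) as [b Hb]; [intros u [Hu _]; lra|auto|].
  destruct (hole_crossing t i a b Hih Clt HAi Ha Hb) as [Hab [Hb1 [Pa [Na [Pb Nb]]]]].
  assert (Clear : forall u, t <= u <= a -> clear u).
  { intros u Hu. destruct (Req_dec u a) as [->|E].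
    - exact (proj2 (hole_boundary_in_domain i _ Hih Pa Na)).
    - apply (clear_before_contact t a l); auto; lra. }
  assert (S1 := straight_run t a ltac:(lra) ltac:(lra) Clear).
  destruct (hole_jump i _ _ Hih Pa Na Pb Nb) as [g2 G2].
  destruct (IH b (remove Nat.eq_dec i l)) as [g3 G3]; try lra.
  - intros j Hj Hint. destruct (Nat.eq_dec j i) as [->|Hji]; auto.
    apply (Disj j i Hj Hih Hji (comb b s v)); auto. apply interior_in; auto.
  - intros j Hj [u [Hu Pu]]. apply in_in_remove.
    + intros ->. assert (hits i t u) by (split; [lra|auto]). pose proof (proj1 Hb u H). lra.
    + apply Cover; auto. exists u. split; [lra|auto].
  - pose proof (remove_length_lt Nat.eq_dec l i Hil). lia.
  - assert (H1 : 0 < (a - t) * dist2 s v + dl) by nra.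
    assert (H2 : 0 < 192 * dl) by lra.
    assert (H3 : 0 < (1 - b) * dist2 s v + (INR n + 1) * (193 * dl)) by (pose proof (pos_INR n); nra).
    destruct (concat3_path _ _ _ _ _ _ _ _ _ _ _ H1 H2 H3 S1 G2 G3) as [g G].
    exists g. eapply lip_path_weaken; [|exact G]. rewrite S_INR. nra.
Qed.
End Walk.

Lemma leftmost_point S : attains_min S -> exists v, S v /\ ~ interior S v.
Proof.
  intro HM. destruct (HM (fun p => - fst p) 1) as [v [Sv Hv]]; [lra| |].
  { intros p q. apply Rabs_le. pose proof (abs_le_dist2_x p q). apply Rabs_le_inv in H. lra. }
  exists v. split; auto. intros [e [He Hb]].
  assert (S (fst v + e / 2, snd v)) by (apply Hb; rewrite dist2_shift_x, Rabs_right; lra).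
  specialize (Hv _ H). simpl in Hv. lra.
Qed.

Lemma polygon_diam_pos S d : convex_polygon S -> is_diam S d -> 0 < d.
Proof.
  intros HS [Hd _]. destruct (convex_polygon_props S HS) as [_ [_ [c [e [He Hb]]]]].
  assert (S (fst c + e / 2, snd c)) by (apply Hb; rewrite dist2_shift_x, Rabs_right; lra).
  assert (S c) by (apply Hb; rewrite dist2_refl; lra).
  assert (dist2 c (fst c + e / 2, snd c) <= d) by (apply Hd; exists c, (fst c + e / 2, snd c); auto).
  rewrite dist2_shift_x, Rabs_right in H1 by lra. lra.
Qed.

Lemma holes_compact h (Ph : nat -> pset) dl : (forall i, (i < h)%nat -> convex_polygon (Ph i)) ->
  (forall i, (i < h)%nat -> exists d, is_diam (Ph i) d /\ d <= dl) ->
  forall i, (i < h)%nat -> convex (Ph i) /\ attains_min (Ph i) /\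
    (exists c, interior (Ph i) c) /\ (forall p q, Ph i p -> Ph i q -> dist2 p q <= dl).
Proof.
  intros CPh Hdiam i Hi. destruct (convex_polygon_props _ (CPh i Hi)) as [A1 [A2 A3]].
  repeat split; auto. intros p q Hp Hq. destruct (Hdiam i Hi) as [d [[Hd _] Hd']].
  assert (dist2 p q <= d) by (apply Hd; exists p, q; auto). lra.
Qed.

Lemma length_budget c h D Delta l0 : 0 < c -> (1 <= h)%nat -> 0 <= D -> 0 <= Delta -> l0 <= D ->
  Delta <= c / INR h -> l0 + (INR h + 1) * (193 * (Delta * D)) <= (1 + 400 * c) * D.
Proof.
  intros Hc Hh HD HDel Hl0 HDc. assert (Hhr : 1 <= INR h) by (apply (le_INR 1); lia).
  assert (Hk : Delta * D * INR h <= c * D).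
  { apply Rmult_le_compat_r with (r := D) in HDc; auto.
    unfold Rdiv in HDc. apply Rmult_le_compat_r with (r := INR h) in HDc; [|lra].
    replace (c * / INR h * D * INR h) with (c * D) in HDc by (field; lra). nra. }
  assert (Delta * D <= Delta * D * INR h) by (pose proof (Rmult_le_pos _ _ HDel HD); nra).
  nra.
Qed.

Theorem lemma3 :
  forall c : R, 0 < c ->
  exists C : R, 0 < C /\
  forall (h : nat) (P0 : pset) (Ph : nat -> pset) (D Delta : R),
    (1 <= h)%nat ->
    in_class_C h P0 Ph ->
    is_diam (domain h P0 Ph) D ->
    Delta <= c / INR h ->
    (forall i, (i < h)%nat -> exists d, is_diam (Ph i) d /\ d <= Delta * D) ->
    forall s, domain h P0 Ph s ->
    exists gamma : R -> pt,
      path_in (domain h P0 Ph) gamma /\ gamma 0 = s /\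
      boundary P0 (gamma 1) /\ length_le gamma (C * D).
Proof.
  intros c Hc. exists (1 + 400 * c). split; [lra|].
  intros h P0 Ph D Delta Hh [CP0 [CPh [Disj Inside]]] [HDub _] HDel Hdiam s Hs.
  destruct (convex_polygon_props P0 CP0) as [Cv0 [Hm0 _]].
  destruct (leftmost_point P0 Hm0) as [v [Pv Nv]].
  assert (Dv : domain h P0 Ph v).
  { split; auto. intros i Hi Hint. apply Nv, (Inside i Hi), interior_in; auto. }
  assert (Hsv : dist2 s v <= D) by (apply HDub; exists s, v; auto).
  pose proof (dist2_nonneg s v).
  set (dl := Delta * D).
  assert (Hdl : 0 < dl).
  { destruct (Hdiam 0%nat ltac:(lia)) as [d0 [Hd0 Hd0']].
    pose proof (polygon_diam_pos _ _ (CPh 0%nat ltac:(lia)) Hd0). unfold dl; lra. }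
  pose proof (holes_compact h Ph dl CPh Hdiam) as Holes.
  destruct (walk h P0 Ph s v dl Cv0 (proj1 Hs) Pv Nv Holes Disj Inside Hdl h 0 (seq 0 h)) as [g [GL [GS [G0 G1]]]].
  - lra.
  - unfold clear. rewrite comb_0. apply Hs.
  - intros j Hj _. apply in_seq. lia.
  - rewrite length_seq. lia.
  - rewrite comb_0 in G0. rewrite Rminus_0_r, Rmult_1_l in GL.
    assert (HDel0 : 0 <= Delta) by (unfold dl in Hdl; nra).
    pose proof (length_budget c h D Delta (dist2 s v) Hc Hh ltac:(lra) HDel0 Hsv HDel) as HB.
    assert (HL0 : 0 <= dist2 s v + (INR h + 1) * (193 * dl)) by (pose proof (pos_INR h); nra).
    destruct (lip_path_in _ g _ HL0 GL GS) as [P1 P2].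
    exists g. split; [exact P1|]. split; [exact G0|]. split; [split|].
    + intros e He. exists v. rewrite G1, dist2_refl. auto.
    + rewrite G1. exact Nv.
    + intros ts HS HF. eapply Rle_trans. apply P2; auto. exact HB.
Qed.
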